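(* Let $(X,d)$ be a metric space, $q\geq 1$ a constant, and $T\subseteq X$ with $|T|=k\ge 2$. Then \[ \frac{k}{2}\,\mathrm{st}^q(T)\le \mathrm{cl}^q(T)\le 2^{q-1}k\,\mathrm{st}^q(T),\] and, if $k$ is even, \[ \frac{2(k-1)}{k}\,\mathrm{bp}^q(T)\le \mathrm{cl}^q(T)\le (2^q+1)\,\mathrm{bp}^q(T).\]
   Context: $d^q(u,v)=d(u,v)^q$. $\mathrm{cl}^q(T)=\sum_{\{u,v\}\subseteq T} d^q(u,v)$; $\mathrm{st}^q(T)=\min_{z\in T}\sum_{u\in T\setminus\{z\}} d^q(z,u)$; $\mathrm{bp}^q(T)=\min_{L\subseteq T,|L|=\lfloor |T|/2\rfloor}\sum_{\ell\in L,r\in T\setminus L} d^q(\ell,r)$. *)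

From HB Require Import structures.
From mathcomp Require Import all_boot all_order all_algebra.
From mathcomp Require Import all_classical all_reals all_analysis.
Set Implicit Arguments. Unset Strict Implicit. Unset Printing Implicit Defensive.
Import Order.TTheory GRing.Theory Num.Theory.
Local Open Scope ring_scope.

Definition is_metric (R : realType) (X : Type) (d : X -> X -> R) : Prop :=
  (forall x y, 0 <= d x y) /\
  (forall x y, d x y = 0 <-> x = y) /\
  (forall x y, d x y = d y x) /\
  (forall x y z, d x z <= d x y + d y z).

(* A k-point set T = {t 0, ..., t (k-1)} is given by an injective map t. *)
Section Costs.
Variables (R : realType) (X : Type) (d : X -> X -> R) (q : R) (k : nat)
          (t : 'I_k -> X).

Definition dq (x y : X) : R := (d x y) `^ q.

Definition clq : R := \sum_(i < k) \sum_(j < k | (i < j)%N) dq (t i) (t j).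

Definition star_cost (z : 'I_k) : R := \sum_(u < k | u != z) dq (t z) (t u).

Definition stq : R :=
  if [pick z : 'I_k] is Some z0 then star_cost (Order.arg_min z0 (fun _ => true) star_cost)
  else 0.

Definition bip_cost (L : {set 'I_k}) : R :=
  \sum_(l in L) \sum_(r in ~: L) dq (t l) (t r).

Definition bpq : R :=
  if [pick L : {set 'I_k} | #|L| == k./2] is Some L0 then
    bip_cost (Order.arg_min L0 (fun L : {set 'I_k} => #|L| == k./2) bip_cost)
  else 0.
End Costs.

From HB Require Import structures.
From mathcomp Require Import all_boot all_order all_algebra.
From mathcomp Require Import all_classical all_reals all_analysis.
From mathcomp Require Import ring lra zify.
Set Implicit Arguments. Unset Strict Implicit. Unset Printing Implicit Defensive.
Import Order.TTheory GRing.Theory Num.Theory.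
Local Open Scope ring_scope.

(* By convexity of s |-> s^q, d^q is a 2^(q-1)-relaxed semimetric:
   d^q(x,z) <= 2^(q-1) (d^q(x,y) + d^q(y,z)).  Summing this over all pairs with
   the center z as intermediate point bounds cl^q by the star cost; for a balanced
   bipartition L | ~L, routing every pair inside L (resp. ~L) through each point of
   the other side bounds cl^q by the bipartition cost.  Conversely, the cheapest
   star costs at most the average star, and the cheapest balanced bipartition at
   most the average over all C(k, k/2) of them, in which each pair of points is
   separated by exactly C(k-2, k/2-1) bipartitions in each orientation. *)

Lemma powR_pred (R : realType) (x p : R) : 0 < x -> x `^ p = x * x `^ (p - 1).
Proof.
move=> x_gt0; rewrite -{1}(subrKC 1 p) [LHS]powRD ?(gt_eqF x_gt0) ?implybT //.
by rewrite powRr1 ?ltW.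
Qed.

Lemma powRD_le (R : realType) (p a b : R) : 1 <= p -> 0 <= a -> 0 <= b ->
  (a + b) `^ p <= 2 `^ (p - 1) * (a `^ p + b `^ p).
Proof.
move=> p1 a0 b0.
have midpoint : (2^-1 * a + 2^-1 * b) `^ p <= 2^-1 * a `^ p + 2^-1 * b `^ p.
  rewrite {2 4}(_ : 2^-1 = 1 - 2^-1 :> R); last by rewrite {2}(splitr 1) div1r addrK.
  by apply: (convex_powR p1 (Itv01 _ _)) => //=;
    rewrite ?inE/= ?in_itv/= ?a0 ?b0 ?invr_ge0// invf_le1 ?ler1n.
have -> : a + b = 2 * (2^-1 * a + 2^-1 * b) by field.
rewrite powRM ?addr_ge0 ?mulr_ge0 ?invr_ge0 // powR_pred // -mulrA mulrCA.
rewrite ler_wpM2l ?powR_ge0 //.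
have -> : a `^ p + b `^ p = 2 * (2^-1 * a `^ p + 2^-1 * b `^ p) by field.
by rewrite ler_pM2l.
Qed.

Lemma mul_binSS n m :
  ('C(n.+2, m.+1) * (m.+1 * (n.+1 - m)) = 'C(n, m) * (n.+2 * n.+1))%N.
Proof. by have := mul_bin_diag n.+2 m; have := mul_bin_down n.+1 m => /=; nia. Qed.

Lemma card_draws_separating (T : finType) (i j : T) m : i != j ->
  #|[set L : {set T} | [&& #|L| == m.+1, i \in L & j \notin L]]| = 'C(#|T| - 2, m).
Proof.
move=> ij; set B := ~: [set i; j].
have cardB : #|B| = (#|T| - 2)%N by rewrite cardsCs finset.setCK cards2 ij.
have notinB (A : {set T}) : A \subset B -> (i \notin A) && (j \notin A).
  move=> sAB; apply/andP; split; apply/negP => /(fintype.subsetP sAB);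
  by rewrite /B !inE eqxx ?orbT.
rewrite -cardB -cards_draws.
have -> : [set L : {set T} | [&& #|L| == m.+1, i \in L & j \notin L]] =
          [set i |: A | A in [set A : {set T} | A \subset B & #|A| == m]].
  apply/setP => L; rewrite inE; apply/idP/imsetP.
  - move=> /and3P[/eqP cardL iL jL]; exists (L :\ i); last by rewrite finset.setD1K.
    rewrite inE; apply/andP; split; last first.
      by move: cardL; rewrite (cardsD1 i) iL add1n => -[->].
    apply/fintype.subsetP => x; rewrite !inE => /andP[xi xL]; rewrite (negbTE xi) /=.
    by apply: contraNneq jL => <-.
  - move=> [A]; rewrite inE => /andP[sAB /eqP cardA] ->.
    have /andP[iA jA] := notinB A sAB.
    by rewrite cardsU1 iA cardA add1n !inE !eqxx (eq_sym j) (negbTE ij) (negbTE jA).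
rewrite card_in_imset // => A1 A2; rewrite !inE => /andP[s1 _] /andP[s2 _] eA.
have /andP[i1 _] := notinB A1 s1; have /andP[i2 _] := notinB A2 s2.
by rewrite -(finset.setU1K i1) eA finset.setU1K.
Qed.

Section RelaxedSemimetric.
Variables (R : realType) (X : Type) (d : X -> X -> R) (q c : R).
Hypothesis dq_refl : forall x, dq d q x x = 0.
Hypothesis dq_sym : forall x y, dq d q x y = dq d q y x.
Hypothesis dq_relaxed_triangle :
  forall x y z, dq d q x z <= c * (dq d q x y + dq d q y z).

Variables (k : nat) (t : 'I_k -> X).
Local Notation D i j := (dq d q (t i) (t j)).

Definition ordered_pair_sum : R := \sum_(i < k) \sum_(j < k) D i j.

Lemma ordered_pair_sum_clq : ordered_pair_sum = 2 * clq d q t.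
Proof.
have split_pair i j :
    D i j = (if (i < j)%N then D i j else 0) + (if (j < i)%N then D j i else 0).
  by case: ltngtP => [||/val_inj->]; rewrite ?addr0 ?add0r ?dq_refl // dq_sym.
rewrite /ordered_pair_sum (eq_bigr _ (fun i _ => eq_bigr _ (fun j _ => split_pair i j))).
under eq_bigr do rewrite big_split /=.
rewrite big_split /= [X in _ + X]exchange_big /= /clq.
under eq_bigr do rewrite -big_mkcond.
by rewrite -mulr2n mulr_natl.
Qed.

Lemma star_cost_sum z : star_cost d q t z = \sum_(j < k) D z j.
Proof. by rewrite /star_cost [RHS](bigD1 z) //= dq_refl add0r. Qed.

Lemma stq_le_star_cost z : stq d q t <= star_cost d q t z.
Proof. by rewrite /stq; case: pickP => [z0 _|/(_ z)//]; case: arg_minP => // m _ ->. Qed.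

Lemma stq_attained : (0 < k)%N -> exists z, stq d q t = star_cost d q t z.
Proof.
move=> k_gt0; rewrite /stq; case: pickP => [z0 _|/(_ (Ordinal k_gt0))//].
by case: arg_minP => // z; exists z.
Qed.

Lemma ordered_pair_sum_ge_stq : k%:R * stq d q t <= ordered_pair_sum.
Proof.
rewrite mulr_natl -[k in _ *+ k]card_ord -sumr_const.
by apply: ler_sum => z _; rewrite -star_cost_sum stq_le_star_cost.
Qed.

Lemma ordered_pair_sum_le_star_cost z :
  ordered_pair_sum <= c * (2 * k%:R * star_cost d q t z).
Proof.
have -> : c * (2 * k%:R * star_cost d q t z) =
          \sum_(i < k) \sum_(j < k) c * (D i z + D z j).
  rewrite star_cost_sum.
  under [RHS]eq_bigr do rewrite -mulr_sumr big_split /= sumr_const card_ord.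
  rewrite -mulr_sumr big_split /= sumrMnl sumr_const card_ord.
  have -> : \sum_(i < k) D i z = \sum_(i < k) D z i by apply: eq_bigr => i _.
  move: (\sum_(j < k) D z j) => S.
  by rewrite -mulrnDl -mulr_natl; ring.
by apply: ler_sum => i _; apply: ler_sum => j _; exact: dq_relaxed_triangle.
Qed.

Lemma stq_le_clq : k%:R / 2 * stq d q t <= clq d q t.
Proof. by have := ordered_pair_sum_ge_stq; rewrite ordered_pair_sum_clq; lra. Qed.

Lemma clq_le_stq : (0 < k)%N -> clq d q t <= c * k%:R * stq d q t.
Proof.
move=> /stq_attained[z ->]; have := ordered_pair_sum_le_star_cost z.
by rewrite ordered_pair_sum_clq; lra.
Qed.

Lemma bpq_le_bip_cost (L : {set 'I_k}) : #|L| = k./2 -> bpq d q t <= bip_cost d q t L.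
Proof.
move=> /eqP cardL; rewrite /bpq.
case: pickP => [L0 L0_half|/(_ L)]; last by rewrite cardL.
by case: arg_minP => // M _ ->.
Qed.

Lemma bpq_attained :
  exists2 L : {set 'I_k}, #|L| = k./2 & bpq d q t = bip_cost d q t L.
Proof.
rewrite /bpq; case: pickP => [L0 L0_half|no_half].
  by case: arg_minP => // L /eqP cardL _; exists L.
have : (0 < #|[set L : {set 'I_k} | #|L| == k./2]|)%N.
  by rewrite card_draws card_ord bin_gt0 leq_half_double; lia.
by case/card_gt0P => L; rewrite inE no_half.
Qed.

Lemma within_le_across (A B : {set 'I_k}) :
  #|B|%:R * \sum_(i in A) \sum_(j in A) D i j <=
  c * (2 * #|A|%:R * \sum_(i in A) \sum_(r in B) D i r).
Proof.
have -> : c * (2 * #|A|%:R * \sum_(i in A) \sum_(r in B) D i r) =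
          \sum_(i in A) \sum_(j in A) c * \sum_(r in B) (D i r + D r j).
  under [RHS]eq_bigr do under eq_bigr do rewrite big_split /=.
  under [RHS]eq_bigr do rewrite -mulr_sumr big_split /= sumr_const.
  rewrite -mulr_sumr big_split /= sumrMnl sumr_const.
  under [X in _ + X *+ _]eq_bigr do under eq_bigr do rewrite dq_sym.
  move: (\sum_(i in A) \sum_(r in B) D i r) => S.
  by rewrite -mulrnDl -mulr_natl; ring.
rewrite mulr_sumr; apply: ler_sum => i _; rewrite mulr_sumr; apply: ler_sum => j _.
rewrite mulr_natl -sumr_const mulr_sumr.
by apply: ler_sum => r _; exact: dq_relaxed_triangle.
Qed.

Lemma clq_le_bip_cost (L : {set 'I_k}) : #|L| = #|~: L| -> (0 < #|L|)%N ->
  clq d q t <= (2 * c + 1) * bip_cost d q t L.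
Proof.
move=> balanced L_gt0; set C := bip_cost d q t L.
have split_sum (F : 'I_k -> R) :
    \sum_(i < k) F i = \sum_(i in L) F i + \sum_(i in ~: L) F i.
  by rewrite (bigID (mem L)) /=; congr (_ + _); apply: eq_bigl => i; rewrite !inE.
have cross_sym : \sum_(i in ~: L) \sum_(j in L) D i j = C.
  by rewrite exchange_big; apply: eq_bigr => i _; apply: eq_bigr => j _.
have ordered_pair_sum_split : ordered_pair_sum = \sum_(i in L) \sum_(j in L) D i j +
    \sum_(i in ~: L) \sum_(j in ~: L) D i j + 2 * C.
  rewrite /ordered_pair_sum split_sum; under eq_bigr do rewrite split_sum.
  under [X in _ + X]eq_bigr do rewrite split_sum.
  by rewrite !big_split /= cross_sym; rewrite /C /bip_cost; ring.
have within_L := within_le_across L (~: L).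
have within_notL := within_le_across (~: L) L.
rewrite -[\sum_(i in L) \sum_(r in ~: L) D i r]/C -balanced in within_L.
rewrite cross_sym -balanced in within_notL.
have cancel_card W : #|L|%:R * W <= c * (2 * #|L|%:R * C) -> W <= 2 * c * C.
  have card_gt0 : 0 < #|L|%:R :> R by rewrite ltr0n.
  suff -> : c * (2 * #|L|%:R * C) = #|L|%:R * (2 * c * C) by rewrite ler_pM2l.
  ring.
have := cancel_card _ within_L; have := cancel_card _ within_notL.
have := ordered_pair_sum_clq; rewrite ordered_pair_sum_split; lra.
Qed.

Lemma sum_bip_cost m :
  \sum_(L in [set L : {set 'I_k} | #|L| == m.+1]) bip_cost d q t L =
  'C(k - 2, m)%:R * ordered_pair_sum.
Proof.
have bip_cost_cut L : bip_cost d q t L =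
    \sum_(i < k) \sum_(j < k) (if (i \in L) && (j \notin L) then D i j else 0).
  rewrite /bip_cost [LHS]big_mkcond; apply: eq_bigr => i _.
  case: (i \in L) => /=; last by rewrite big1.
  by rewrite [LHS]big_mkcond; apply: eq_bigr => j _; rewrite !inE.
under eq_bigr do rewrite bip_cost_cut.
rewrite exchange_big; under eq_bigr do rewrite exchange_big.
rewrite /ordered_pair_sum mulr_sumr; apply: eq_bigr => i _; rewrite mulr_sumr.
apply: eq_bigr => j _; have [<-|ij] := eqVneq i j.
  by rewrite dq_refl mulr0 big1 // => L _; rewrite andbN.
have := card_draws_separating m ij; rewrite card_ord => <-.
rewrite mulr_natl -sumr_const.
rewrite [LHS]big_mkcond [RHS]big_mkcond; apply: eq_bigr => L _.
by rewrite !inE; case: (#|L| == m.+1); case: (i \in L); case: (j \in L).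
Qed.

Lemma bpq_le_clq : (2 <= k)%N ->
  k%:R * (k%:R - 1) * bpq d q t <= 2 * (k./2)%:R * (k%:R - (k./2)%:R) * clq d q t.
Proof.
move=> k_ge2.
have [m half_eq] : exists m, k./2 = m.+1 by exists (k./2).-1; rewrite prednK // half_gt0.
have [n k_eq] : exists n, k = n.+2 by exists (k - 2)%N; lia.
have m_le_n : (m <= n)%N by move: half_eq; rewrite k_eq /=; lia.
set S := [set L : {set 'I_k} | #|L| == m.+1].
have averaging : #|S|%:R * bpq d q t <= 'C(n, m)%:R * (2 * clq d q t).
  have k_sub2 : (k - 2)%N = n by lia.
  rewrite -ordered_pair_sum_clq -k_sub2 -sum_bip_cost mulr_natl -sumr_const.
  apply: ler_sum => L; rewrite inE => /eqP cardL.
  by apply: bpq_le_bip_cost; rewrite cardL.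
have card_S : #|S| = 'C(n.+2, m.+1) by rewrite card_draws card_ord k_eq.
have identity := congr1 (fun x => x%:R : R) (mul_binSS n m).
rewrite /= !natrM natrB in identity; last by lia.
rewrite card_S in averaging.
have Cnm_gt0 : 0 < 'C(n, m)%:R :> R by rewrite ltr0n bin_gt0.
have kR : k%:R = n.+2%:R :> R by rewrite k_eq.
rewrite kR half_eq -(natr1 n.+1) -(natr1 n) -(natr1 m) in identity *.
have P_ge0 : 0 <= (m%:R + 1) * (n%:R + 1 - m%:R) :> R.
  by rewrite mulr_ge0 // subr_ge0 natr1 ler_nat leqW.
have := ler_wpM2l P_ge0 averaging.
rewrite [_ * (_ * bpq d q t)]mulrA [_ * 'C(n.+2, _)%:R]mulrC identity.
move=> scaled; rewrite -(ler_pM2l Cnm_gt0); lra.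
Qed.

End RelaxedSemimetric.

Section Metric.
Variables (R : realType) (X : Type) (d : X -> X -> R) (q : R).
Hypothesis metric_d : is_metric d.

Lemma metric_dq_refl x : q != 0 -> dq d q x x = 0.
Proof. by case: metric_d => _ [d0 _] q0; rewrite /dq (proj2 (d0 x x) erefl) powR0. Qed.

Lemma metric_dq_sym x y : dq d q x y = dq d q y x.
Proof. by case: metric_d => _ [_ [d_sym _]]; rewrite /dq d_sym. Qed.

Lemma metric_dq_relaxed_triangle x y z : 1 <= q ->
  dq d q x z <= 2 `^ (q - 1) * (dq d q x y + dq d q y z).
Proof.
case: metric_d => d_ge0 [_ [_ d_tri]] q_ge1; rewrite /dq.
apply: le_trans (powRD_le q_ge1 (d_ge0 x y) (d_ge0 y z)).
by apply: ge0_ler_powR; rewrite ?nnegrE ?addr_ge0 ?(le_trans _ q_ge1).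
Qed.
End Metric.

Theorem lemma4 (R : realType) (X : Type) (d : X -> X -> R) (q : R) (k : nat)
  (t : 'I_k -> X) :
  is_metric d -> 1 <= q -> injective t -> (2 <= k)%N ->
  (k%:R / 2 * stq d q t <= clq d q t /\
   clq d q t <= 2 `^ (q - 1) * k%:R * stq d q t) /\
  (~~ odd k ->
   2 * (k%:R - 1) / k%:R * bpq d q t <= clq d q t /\
   clq d q t <= (2 `^ q + 1) * bpq d q t).
Proof.
move=> metric_d q_ge1 _ k_ge2.
have refl x := metric_dq_refl metric_d x (lt0r_neq0 (lt_le_trans ltr01 q_ge1)).
have sym := metric_dq_sym q metric_d.
have tri x y z := metric_dq_relaxed_triangle metric_d x y z q_ge1.
split.
  split; first exact: (stq_le_clq refl sym t).
  exact: (clq_le_stq refl sym tri t (ltnW k_ge2)).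
move=> k_even; have k_double : k = (k./2).*2.
  by rewrite -{1}(odd_double_half k) (negbTE k_even).
have half_pos : 0 < (k./2)%:R :> R by rewrite ltr0n half_gt0.
split.
- have := (bpq_le_clq refl sym t k_ge2).
  have -> : k%:R = 2 * (k./2)%:R :> R by rewrite {1}k_double -mul2n natrM.
  by move=> balanced_bound; rewrite mulrAC ler_pdivrMr ?mulr_gt0 //; nra.
- have [L cardL ->] := bpq_attained d q t.
  rewrite (powR_pred q (ltr0n _ 2)); apply: (clq_le_bip_cost refl sym tri t).
  + by have := cardsC L; rewrite card_ord cardL; lia.
  + by rewrite cardL; lia.
Qed.
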